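(* Let $G$ be a plane graph with maximum degree $\Delta\ge 2$. Then $\pi_{fl}(G)\le \lceil \Delta + 4\sqrt{\Delta}+3\rceil$.
   Context: A plane graph is a planar graph with a fixed embedding in the plane. A facial path is a path whose vertices are consecutive vertices on the boundary walk of some face. A $2j$-repetition is a path $v_1\dots v_{2j}$ with $c(v_i)=c(v_{i+j})$ for $1\le i\le j$. A vertex-coloring is facially non-repetitive if no facial path is a repetition. $\pi_{fl}(G)$, the facial Thue choice number, is the minimum $k$ such that for every assignment of lists of size at least $k$ to the vertices, $G$ has a facially non-repetitive coloring with each vertex colored from its list. *)

From mathcomp Require Import all_boot.
Set Implicit Arguments. Unset Strict Implicit. Unset Printing Implicit Defensive.

Section PlaneGraphs.
Variable V : finType.
Variable adj : rel V.

Definition simple_graph := symmetric adj /\ irreflexive adj.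

Definition nbhd (u : V) : {set V} := [set w | adj u w].
Definition deg (u : V) : nat := #|nbhd u|.
Definition max_deg : nat := \max_(u : V) deg u.

(* A rotation system: rot u is a cyclic permutation of the neighbours of u
   (rot u v = the neighbour following v in the clockwise order around u). *)
Definition rotation_system (rot : V -> V -> V) : Prop :=
  forall u,
    [/\ {in nbhd u, forall v, rot u v \in nbhd u},
        {in nbhd u &, injective (rot u)} &
        {in nbhd u &, forall v w, exists n, iter n (rot u) v = w}].

(* darts (oriented edges) and the face-tracing permutation
   phi = sigma o alpha : after traversing the dart (u,v), leave v along the
   dart (v, rot v u). Orbits of phi on darts = face boundary walks. *)
Definition dart (d : V * V) : bool := adj d.1 d.2.
Definition face_step (rot : V -> V -> V) (d : V * V) : V * V :=
  (d.2, rot d.2 d.1).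

Definition num_faces (rot : V -> V -> V) : nat := fcard (face_step rot) dart.
Definition num_darts : nat := #|[pred d : V * V | dart d]|.   (* = 2 |E| *)
Definition num_components : nat := n_comp adj (predT : pred V).
Definition num_isolated : nat := #|[pred u : V | deg u == 0]|.

(* Genus 0: Euler's formula V - E + F = 2 on every component (an isolated
   vertex is counted as a component with one face). Since each component
   of an embedding given by a rotation system has V-E+F <= 2, this is
   equivalent to every component being embedded in the sphere. *)
Definition planar_rotation (rot : V -> V -> V) : Prop :=
  rotation_system rot /\
  2 * #|V| + 2 * num_faces rot + 2 * num_isolated
    = 4 * num_components + num_darts.

Definition facial_path (rot : V -> V -> V) (s : seq V) : Prop :=
  exists (d : V * V) (n : nat),
    [/\ dart d,
        s = [seq (iter i (face_step rot) d).1 | i <- iota 0 n] & uniq s].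

Definition repetition (c : V -> nat) (s : seq V) : Prop :=
  exists j, [/\ 0 < j, size s = j + j &
    forall i, i < j -> nth 0 (map c s) i = nth 0 (map c s) (i + j)].

Definition facially_nonrepetitive (rot : V -> V -> V) (c : V -> nat) : Prop :=
  forall s, facial_path rot s -> ~ repetition c s.

(* pi_fl(G) <= k : every assignment of lists of at least k (distinct) colors
   admits a facially non-repetitive coloring from the lists. *)
Definition facial_thue_choosable (rot : V -> V -> V) (k : nat) : Prop :=
  forall L : V -> seq nat, (forall v, k <= size (undup (L v))) ->
    exists c : V -> nat,
      (forall v, c v \in L v) /\ facially_nonrepetitive rot c.

End PlaneGraphs.

(* Counting argument in the style of Rosenfeld.  Fix x in (0,1) and let C(S)
   be the number of colorings from the lists (truncated to k colors) that take
   a dummy value outside S and have no facial repetition inside S.  We show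
   C(S) <= x C(S + v) for v outside S, by induction on |S|.  A bad extension
   of a good coloring of S to v has a facial repetition through v.  If it has
   length 2, the color of v is that of a neighbour, which excludes at most D
   colors.  If it has length 2(i+1) >= 4, it starts at one of at most
   2(i+1)D darts, and the extension is determined by its restriction outside
   the half containing v: a good coloring of S minus i vertices, of which
   there are at most x^i C(S) by induction.  Hence
     k C(S) <= C(S + v) + C(S) (D + 2D \sum_(i >= 1) (i+1) x^i),
   which gives the claim as soon as k >= 1/x + D + 2D((1-x)^-2 - 1).  Then
   C(V) >= x^-|V| > 0, and x = 1/(2 sqrt D + 1) makes the bound
   D + 4 sqrt D + 3/2. *)

From mathcomp Require Import all_boot all_order all_algebra.
From mathcomp Require Import boolp Rstruct.
From Stdlib Require Import Reals.
From mathcomp Require Import zify ring lra.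

Set Implicit Arguments. Unset Strict Implicit. Unset Printing Implicit Defensive.
Import Order.TTheory GRing.Theory Num.Theory.

Lemma leq_card_in_sub (T T' : finType) (f : T -> T') (A : {pred T}) (B : {pred T'}) :
  {in A &, injective f} -> {in A, forall a, f a \in B} -> #|A| <= #|B|.
Proof.
move=> f_inj fAB; rewrite -(card_in_imset f_inj); apply: subset_leq_card.
by apply/subsetP => _ /imsetP[a aA ->]; apply: fAB.
Qed.

Lemma card_bigcup_seq_le (T : finType) (I : Type) (r : seq I) (P : pred I) (F : I -> {set T}) :
  #|\bigcup_(i <- r | P i) F i| <= \sum_(i <- r | P i) #|F i|.
Proof.
elim: r => [|i r IH]; first by rewrite !big_nil cards0.
rewrite !big_cons; case: (P i) => //.
by rewrite (leq_trans (leq_card_setU _ _)) // leq_add2l.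
Qed.

Lemma mem_bigcup_seq (T : finType) (I : eqType) (r : seq I) (F : I -> {set T}) i a :
  i \in r -> a \in F i -> a \in \bigcup_(j <- r) F j.
Proof. by move=> ir aF; rewrite (big_rem _ ir) inE aF. Qed.

Lemma repetition_halves (V : finType) (c : V -> nat) (s : seq V) :
  repetition c s <->
  exists j, [/\ 0 < j, size s = j + j & map c (take j s) = map c (drop j s)].
Proof.
have nth_halves j i : i < j ->
    nth 0 (map c (take j s)) i = nth 0 (map c s) i /\
    nth 0 (map c (drop j s)) i = nth 0 (map c s) (i + j).
  by move=> ij; rewrite map_take map_drop nth_take // nth_drop addnC.
split=> -[j [j_gt0 size_s rep]]; exists j; split=> //; last first.
  by move=> i ij; have [<- <-] := nth_halves j i ij; rewrite rep.
have size_l : size (map c (take j s)) = j by rewrite size_map size_takel ?size_s ?leq_addr.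
apply: (@eq_from_nth _ 0) => [|i]; first by rewrite size_l size_map size_drop size_s addnK.
by rewrite size_l => ij; have [-> ->] := nth_halves j i ij; apply: rep.
Qed.

Lemma map_eq_partner (T : eqType) (A B : seq T) u :
  size A = size B -> u \in A ->
  exists2 w, w \in B & forall (U : Type) (c : T -> U), map c A = map c B -> c u = c w.
Proof.
move=> eq_size uA; set i := index u A.
have iA : i < size A by rewrite index_mem.
exists (nth u B i); first by rewrite mem_nth // -eq_size.
move=> U c /(congr1 (fun l => nth (c u) l i)).
by rewrite !(nth_map u) -?eq_size // nth_index.
Qed.

Lemma half_through (T : eqType) (s : seq T) j v :
  uniq s -> size s = j + j -> v \in s ->
  exists H : seq T, [/\ v \in H, uniq H, size H = j, {subset H <= s} &
    forall u, u \in H -> exists2 w, (w \in s) && (w \notin H) &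
      forall c : T -> nat, map c (take j s) = map c (drop j s) -> c u = c w].
Proof.
move=> s_uniq size_s vs.
have size_l : size (take j s) = j by rewrite size_takel // size_s leq_addr.
have size_r : size (drop j s) = j by rewrite size_drop size_s addnK.
move: s_uniq vs; rewrite -{1 2}[s](cat_take_drop j) cat_uniq mem_cat.
move=> /and3P[uniq_l /hasPn disj uniq_r] /orP[v_l|v_r].
- exists (take j s); split=> // [u /mem_take //|u uH].
  have [w w_r cw] := map_eq_partner (etrans size_l (esym size_r)) uH.
  by exists w; [rewrite (mem_drop w_r) disj | move=> c /cw].
- exists (drop j s); split=> // [u /mem_drop //|u uH].
  have [w w_l cw] := map_eq_partner (etrans size_r (esym size_l)) uH.
  exists w; last by move=> c /esym /cw.
  rewrite (mem_take w_l); apply/negP => /disj; by rewrite w_l.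
Qed.

Lemma eq_in_repetition (V : finType) (c1 c2 : V -> nat) (s : seq V) :
  {in s, c1 =1 c2} -> repetition c1 s -> repetition c2 s.
Proof.
move=> eq_c [j [j_gt0 size_s rep]]; exists j; split=> //.
by have <- : map c1 s = map c2 s by apply/eq_in_map.
Qed.

Lemma leq_deg_max (V : finType) (adj : rel V) v : deg adj v <= max_deg adj.
Proof. exact: leq_bigmax. Qed.

Section FaceWalks.
Variables (V : finType) (adj : rel V) (rot : V -> V -> V).
Hypotheses (adj_sym : symmetric adj) (rot_sys : rotation_system adj rot).

Local Notation step := (face_step rot).

Definition face_walk (d : V * V) (m : nat) : seq V :=
  [seq (iter i step d).1 | i <- iota 0 m].

Lemma size_face_walk d m : size (face_walk d m) = m.
Proof. by rewrite size_map size_iota. Qed.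

Lemma face_step_dart d : dart adj d -> dart adj (step d).
Proof.
case: d => a b; rewrite /dart /= => ab.
have ba : a \in nbhd adj b by rewrite inE adj_sym.
by have [rot_nbhd _ _] := rot_sys b; have := rot_nbhd a ba; rewrite inE.
Qed.

Lemma iter_face_step_dart p d : dart adj d -> dart adj (iter p step d).
Proof. by move=> dd; elim: p => //= p; apply: face_step_dart. Qed.

Lemma face_step_inj : {in dart adj &, injective step}.
Proof.
case=> a1 b [a2 b'] d1 d2 [eq_b rot_eq]; subst b'; congr (_, _).
have [_ rot_inj _] := rot_sys b.
by apply: rot_inj; rewrite // inE adj_sym.
Qed.

Lemma iter_face_step_inj p : {in dart adj &, injective (iter p step)}.
Proof.
elim: p => // p IH d1 d2 dd1 dd2 /= eq_step.
by apply: IH => //; apply: face_step_inj => //; apply: iter_face_step_dart.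
Qed.

Lemma card_darts_at p v : #|[set d | dart adj d & (iter p step d).1 == v]| <= deg adj v.
Proof.
apply: (@leq_card_in_sub _ _ (fun d => (iter p step d).2)) => [d1 d2|d].
  rewrite !inE => /andP[dd1 /eqP v1] /andP[dd2 /eqP v2] eq2.
  apply: (@iter_face_step_inj p d1 d2 dd1 dd2).
  by rewrite [LHS]surjective_pairing [RHS]surjective_pairing v1 v2 eq2.
rewrite !inE => /andP[dd /eqP <-].
by have := iter_face_step_dart p dd; case: (iter p step d).
Qed.

Lemma card_walks_through m v :
  #|[set d | dart adj d & v \in face_walk d m]| <= m * deg adj v.
Proof.
have cover : [set d | dart adj d & v \in face_walk d m] \subset
    \bigcup_(p <- iota 0 m) [set d | dart adj d & (iter p step d).1 == v].
  apply/subsetP => d; rewrite inE => /andP[dd /mapP[p pm ev]].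
  by apply: (mem_bigcup_seq pm); rewrite inE dd -ev eqxx.
apply: leq_trans (subset_leq_card cover) _.
apply: leq_trans (card_bigcup_seq_le _ _ _) _.
rewrite -[X in X * _](subn0 m) -sum_nat_const_nat /index_iota subn0.
by apply: leq_sum => p _; apply: card_darts_at.
Qed.

End FaceWalks.

Section Inequalities.
Local Open Scope ring_scope.

Lemma sum_succ_expr (R : realFieldType) (x : R) N :
  (1 - x) ^+ 2 * \sum_(0 <= i < N) i.+1%:R * x ^+ i =
  1 - N.+1%:R * x ^+ N + N%:R * x ^+ N.+1.
Proof.
elim: N => [|N IH]; first by rewrite big_geq // mulr0; ring.
rewrite big_nat_recr //= mulrDr IH !exprS !mulrS; ring.
Qed.

Lemma sum_succ_expr_le (R : realFieldType) (x : R) N : 0 <= x < 1 ->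
  \sum_(1 <= i < N) i.+1%:R * x ^+ i <= (1 - x) ^- 2 - 1.
Proof.
move=> /andP[x_ge0 x_lt1].
have full M : \sum_(0 <= i < M) i.+1%:R * x ^+ i <= (1 - x) ^- 2.
  have sq_gt0 : 0 < (1 - x) ^+ 2 by rewrite exprn_gt0 // subr_gt0.
  rewrite -(ler_pM2l sq_gt0) sum_succ_expr mulfV ?gt_eqF //.
  have xM_ge0 : 0 <= x ^+ M by rewrite exprn_ge0.
  have Mx_le : M%:R * x <= M%:R :> R by rewrite ler_piMr // ltW.
  rewrite exprS -[M.+1]addn1 natrD; nra.
case: N => [|N]; last by have := full N.+1; rewrite big_ltn //= expr0; lra.
by have := full 1; rewrite big_nat1 big_geq // expr0; lra.
Qed.

Lemma le_setD_expr (T : finType) (R : realDomainType) (F : {set T} -> R) (x : R)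
    (S : {set T}) :
  0 <= x -> (forall (A : {set T}) w, A \proper S -> w \notin A -> F A <= x * F (w |: A)) ->
  forall B : {set T}, B \subset S -> F (S :\: B) <= x ^+ #|B| * F S.
Proof.
move=> x_ge0 grow B; move Bm: #|B| => m; elim: m B Bm => [|m IH] B Bm BS.
  by move/eqP: Bm; rewrite cards_eq0 => /eqP ->; rewrite setD0 expr0 mul1r.
have [a aB] : exists a, a \in B by apply/card_gt0P; rewrite Bm.
have aS : a \in S := subsetP BS a aB.
have Ba_m : #|B :\ a| = m by move: Bm; rewrite (cardsD1 a) aB => -[].
have eqS : S :\: (B :\ a) = a |: (S :\: B).
  by apply/setP => u; rewrite !inE; case: eqP => [->|] //=; rewrite aB.
have SB_proper : S :\: B \proper S.
  by apply/properP; split; [exact: subsetDl | exists a; rewrite // inE aB].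
apply: le_trans (grow _ a SB_proper _) _; first by rewrite inE aB.
rewrite -eqS exprS -mulrA ler_wpM2l // IH //.
exact: subset_trans (subsetDl B [set a]) BS.
Qed.

(* [D] pays for the clashes of [v] with a neighbour and
   [2 D ((1 - x)^-2 - 1) = \sum_(i >= 1) 2 (i+1) D x^i] for the longer repetitions. *)
Definition choice_bound (R : realFieldType) (D : nat) (x : R) : R :=
  x^-1 + D%:R + 2 * D%:R * ((1 - x) ^- 2 - 1).

Lemma choice_bound_sqrt (R : rcfType) (D : nat) : (0 < D)%nat ->
  let x : R := (2 * Num.sqrt D%:R + 1)^-1 in
  [/\ 0 < x, x < 1 & choice_bound D x = D%:R + 4 * Num.sqrt D%:R + 3 / 2].
Proof.
move=> D_gt0 x; have t_gt0 : 0 < Num.sqrt (D%:R : R) by rewrite sqrtr_gt0 ltr0n.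
have tt : D%:R = Num.sqrt (D%:R : R) ^+ 2 by rewrite sqr_sqrtr // ler0n.
rewrite /choice_bound /x; move: t_gt0 tt; set t := Num.sqrt _ => t_gt0 ->.
split; first by rewrite invr_gt0; lra.
  by rewrite invf_lt1; lra.
by field; rewrite addrK; apply/andP; split; rewrite gt_eqF //; lra.
Qed.

Lemma choice_bound_gt0 (R : realFieldType) (D : nat) (x : R) :
  0 < x < 1 -> 0 < choice_bound D x.
Proof.
move=> /andP[x_gt0 x_lt1].
have Q_ge1 : 1 <= (1 - x) ^- 2.
  by rewrite invf_ge1 ?exprn_gt0 ?subr_gt0 // exprn_ile1 // ?subr_ge0 ?ltW //; lra.
have := invr_gt0 x; rewrite x_gt0 /choice_bound => x'_gt0.
have D_ge0 : 0 <= D%:R :> R := ler0n _ _.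
have : 0 <= 2 * D%:R * ((1 - x) ^- 2 - 1) by rewrite !mulr_ge0 // subr_ge0.
lra.
Qed.

End Inequalities.

Section ListColoring.
Variables (V : finType) (adj : rel V) (rot : V -> V -> V).
Hypotheses (adj_sym : symmetric adj) (adj_irr : irreflexive adj)
  (rot_sys : rotation_system adj rot).
Variables (n : nat) (L : V -> seq nat).
Hypothesis L_size : forall v, n.+1 <= size (undup (L v)).

Local Notation Delta := (max_deg adj).
Local Notation coloring := {ffun V -> 'I_n.+1}.

Definition palette v := take n.+1 (undup (L v)).
Definition color v (i : 'I_n.+1) := nth 0 (palette v) i.
Definition paint (f : coloring) v := color v (f v).

Lemma size_palette v : size (palette v) = n.+1.
Proof. exact: size_takel. Qed.

Lemma color_inj v : injective (color v).
Proof.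
move=> i1 i2 /eqP; rewrite nth_uniq ?size_palette ?take_uniq ?undup_uniq //.
by move/eqP/val_inj.
Qed.

Lemma color_in_list v i : color v i \in L v.
Proof. by rewrite -mem_undup (@mem_take n.+1) // mem_nth ?size_palette. Qed.

(* [f u] indexes the first [n.+1] distinct colors of [L u]; outside [S] it is
   the dummy index [ord0], so that [f] is determined by its restriction to [S]. *)
Definition admissible (S : {set V}) (f : coloring) : Prop :=
  (forall u, u \notin S -> f u = ord0) /\
  (forall s, facial_path adj rot s -> {subset s <= S} -> ~ repetition (paint f) s).

Definition good_colorings S := [set f | `[< admissible S f >]].

Lemma good_coloringsP S f : reflect (admissible S f) (f \in good_colorings S).
Proof. by rewrite inE; apply: asboolP. Qed.

Lemma card_good_colorings0 : #|good_colorings set0| = 1.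
Proof.
apply/eqP/cards1P; exists [ffun => ord0]; apply/setP => f.
rewrite in_set1; apply/good_coloringsP/eqP => [[f0 _]|->].
  by apply/ffunP => u; rewrite ffunE f0 ?in_set0.
split=> [u _|[|u s] _ sub [j [j_gt0 size_s _]]]; first by rewrite ffunE.
  by move: size_s => /=; lia.
by have := sub u (mem_head _ _); rewrite in_set0.
Qed.

Section Extension.
Variables (S : {set V}) (v : V).
Hypothesis vNS : v \notin S.

Definition extend (g : coloring) (y : 'I_n.+1) : coloring :=
  [ffun u => if u == v then y else g u].
Local Notation ext p := (extend p.1 p.2).

Definition pairs := setX (good_colorings S) [set: 'I_n.+1].
Definition good_pairs := [set p in pairs | ext p \in good_colorings (v |: S)].

Lemma extend_neq g y u : u != v -> extend g y u = g u.
Proof. by move/negbTE => uv; rewrite ffunE uv. Qed.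

Lemma extend_inj : {in pairs &, injective (fun p => ext p)}.
Proof.
move=> [g1 y1] [g2 y2]; rewrite !in_setX !in_setT !andbT /=.
move=> /good_coloringsP[g1_0 _] /good_coloringsP[g2_0 _] eq_ext.
have := congr1 (fun f : coloring => f v) eq_ext; rewrite !ffunE eqxx => <-.
congr (_, _); apply/ffunP => u; have := congr1 (fun f : coloring => f u) eq_ext.
by rewrite !ffunE; case: eqP => [->|] // _; rewrite g1_0 ?g2_0.
Qed.

Lemma mem_good_pairs p :
  (p \in good_pairs) = (p \in pairs) && (ext p \in good_colorings (v |: S)).
Proof. by rewrite /good_pairs in_set. Qed.

Lemma card_good_pairs : #|good_pairs| <= #|good_colorings (v |: S)|.
Proof.
apply: (@leq_card_in_sub _ _ (fun p => ext p)) => [p1 p2|p]; rewrite !mem_good_pairs.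
  by move=> /andP[P1 _] /andP[P2 _]; apply: extend_inj.
by case/andP.
Qed.

Definition clash (g : coloring) : {set 'I_n.+1} :=
  [set y | [exists w, adj v w && (color v y == paint g w)]].

Definition short_clashes := [set p in pairs | p.2 \in clash p.1].

Lemma card_clash g : #|clash g| <= Delta.
Proof.
apply: leq_trans (leq_deg_max adj v).
pose nb y := odflt v [pick w | adj v w && (color v y == paint g w)].
have nbP y : y \in clash g -> adj v (nb y) && (color v y == paint g (nb y)).
  rewrite inE /nb => /existsP[w wP].
  by case: pickP => [//|/(_ w)]; rewrite wP.
apply: (@leq_card_in_sub _ _ nb) => [y1 y2 /nbP/andP[_ /eqP c1] /nbP/andP[_ /eqP c2] eq_nb|y].
  by apply: (@color_inj v); rewrite c1 c2 eq_nb.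
by move=> /nbP/andP[vy _]; rewrite inE.
Qed.

Lemma card_short_clashes : #|short_clashes| <= #|good_colorings S| * Delta.
Proof.
have cover : short_clashes \subset
    \bigcup_(g in good_colorings S) [set (g, y) | y in clash g].
  apply/subsetP => -[g y]; rewrite /short_clashes in_set in_setX /= => /andP[/andP[gS _] yg].
  by apply/bigcupP; exists g => //; apply/imsetP; exists y.
apply: leq_trans (subset_leq_card cover) _.
apply: leq_trans (card_bigcup_seq_le _ _ _) _.
rewrite -sum_nat_const; apply: leq_sum => g _.
exact: leq_trans (leq_imset_card _ _) (card_clash g).
Qed.

Lemma short_clash_of_rep g y a b : adj a b -> v \in [:: a; b] ->
  paint (extend g y) a = paint (extend g y) b -> y \in clash g.
Proof.
have clash_nb w : adj v w -> paint (extend g y) v = paint (extend g y) w -> y \in clash g.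
  move=> vw; have wv : w != v by apply: contraTneq vw => ->; rewrite adj_irr.
  rewrite /paint (extend_neq _ _ wv) ffunE eqxx => eq_c.
  by rewrite inE; apply/existsP; exists w; rewrite vw eq_c eqxx.
move=> ab; rewrite in_cons mem_seq1 => /orP[] /eqP eq_v; rewrite -eq_v in ab *; first exact: clash_nb.
by move=> eq_c; apply: (clash_nb a); rewrite 1?adj_sym ?eq_c.
Qed.

(* Repetitions of length [2 (i.+1)], indexed by [i] so that they cost [x ^+ i]. *)
Definition face_seg d i := face_walk rot d (i.+1 + i.+1).

Definition through i d := [&& dart adj d, uniq (face_seg d i),
  all (mem (v |: S)) (face_seg d i) & v \in face_seg d i].

Definition long_clashes i d := [set p in pairs | through i d &&
  (map (paint (ext p)) (take i.+1 (face_seg d i)) ==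
   map (paint (ext p)) (drop i.+1 (face_seg d i)))].

Lemma card_through i : #|[set d | through i d]| <= (i.+1 + i.+1) * Delta.
Proof.
apply: leq_trans (leq_trans _ (card_walks_through adj_sym rot_sys (i.+1 + i.+1) v)) _.
  apply: subset_leq_card; apply/subsetP => d.
  by rewrite !inE => /and4P[dd _ _ vd]; rewrite dd.
by rewrite leq_mul2l leq_deg_max orbT.
Qed.

(* Forgetting the colors on [H] is injective on [A], as each of them is copied
   from a vertex outside [H]. *)
Lemma card_determined_off (H : seq V) (A : {set coloring * 'I_n.+1}) :
  A \subset pairs -> v \in H -> {subset H <= v |: S} ->
  (forall u, u \in H -> exists2 w, w \notin H &
     forall p, p \in A -> paint (ext p) u = paint (ext p) w) ->
  #|A| <= #|good_colorings (S :\: ([set u in H] :\ v))|.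
Proof.
move=> A_pairs vH H_sub partner.
pose forget p : coloring := [ffun u => if u \in H then ord0 else ext p u].
apply: (@leq_card_in_sub _ _ forget) => [p1 p2 A1 A2 eq_forget|[g y] Ap].
  have off w : w \notin H -> ext p1 w = ext p2 w.
    by move=> wH; move: (congr1 (fun f : coloring => f w) eq_forget); rewrite !ffunE (negbTE wH).
  apply: extend_inj; rewrite ?(subsetP A_pairs) //; apply/ffunP => u.
  have [uH|/off //] := boolP (u \in H).
  have [w wH cw] := partner u uH; apply: (@color_inj u).
  by move: (cw p1 A1) (cw p2 A2); rewrite /paint (off w wH) => -> ->.
have /good_coloringsP[g0 g_norep] : g \in good_colorings S.
  by have := subsetP A_pairs _ Ap; rewrite in_setX => /andP[].
have off u : u \in S :\: ([set u in H] :\ v) -> (u \notin H) && (u != v).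
  rewrite !inE => /andP[uT uS]; have uv : u != v by apply: contraNneq vNS => <-.
  by move: uT; rewrite uv /= andbT.
apply/good_coloringsP; split=> [u uS|s fs sub].
  rewrite ffunE; case: ifP => // /negbT uH.
  have uv : u != v by apply: contraNneq uH => ->.
  rewrite extend_neq // g0 //; apply: contra uS => uS.
  by rewrite !inE uS (negbTE uH) andbF.
have offs : {in s, paint g =1 paint (forget (g, y))}.
  by move=> u /sub /off /andP[uH uv]; rewrite /paint ffunE (negbTE uH) extend_neq.
move=> /(eq_in_repetition (fun u us => esym (offs u us))).
by apply: g_norep => // u /sub; rewrite inE => /andP[].
Qed.

Lemma card_long_clashes i d : through i d ->
  exists T : {set V}, [/\ T \subset S, #|T| = i &
    #|long_clashes i d| <= #|good_colorings (S :\: T)|].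
Proof.
case/and4P => _ seg_uniq /allP seg_sub v_seg.
have [H [vH H_uniq size_H H_seg partner]] :=
  half_through seg_uniq (size_face_walk rot d (i.+1 + i.+1)) v_seg.
exists ([set u in H] :\ v); split.
- apply/subsetP => u; rewrite !inE => /andP[uv uH].
  by have := seg_sub u (H_seg u uH); rewrite !inE (negbTE uv).
- move: (cardsD1 v [set u in H]); rewrite inE vH cardsE (card_uniqP H_uniq) size_H.
  by rewrite add1n => -[].
apply: card_determined_off => // [|u /H_seg /seg_sub //|u uH].
  by apply/subsetP => p; rewrite /long_clashes in_set => /andP[].
have [w /andP[_ wH] cw] := partner u uH; exists w => // p.
by rewrite /long_clashes in_set => /and3P[_ _ /eqP /cw].
Qed.

Lemma bad_extension g y :
  g \in good_colorings S -> extend g y \notin good_colorings (v |: S) ->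
  exists s, [/\ facial_path adj rot s, {subset s <= v |: S}, v \in s &
    repetition (paint (extend g y)) s].
Proof.
move=> /good_coloringsP[g0 g_norep] /good_coloringsP; apply: contra_notP => no_rep.
split=> [u|s fs sub rep].
  by rewrite !inE negb_or => /andP[uv uS]; rewrite extend_neq // g0.
have [vs|vNs] := boolP (v \in s); first by apply: no_rep; exists s.
have Ns u : u \in s -> u != v by apply: contraTneq => ->.
apply: (g_norep s fs) => [u us|]; first by have := sub u us; rewrite !inE (negbTE (Ns u us)).
by apply: eq_in_repetition rep => u /Ns uv; rewrite /paint extend_neq.
Qed.

Lemma bad_pairs_sub : pairs :\: good_pairs \subset
  short_clashes :|: \bigcup_(1 <= i < #|V|) \bigcup_(d : V * V) long_clashes i d.
Proof.
apply/subsetP => -[g y]; rewrite in_setD mem_good_pairs => /andP[bad P].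
have gS : g \in good_colorings S by move: P; rewrite in_setX => /andP[].
rewrite P /= in bad.
have [s [[d [m [dd def_s s_uniq]]] sub vs /repetition_halves[j [j_gt0 size_s rep]]]] :=
  bad_extension gS bad.
have size_m : m = j + j by rewrite -size_s def_s size_face_walk.
case: j j_gt0 => [//|[|i]] _ in size_s rep size_m *.
  rewrite inE /short_clashes in_set P /=; move: vs rep; rewrite def_s size_m /=.
  by move=> vs [eq_c]; rewrite (short_clash_of_rep dd vs eq_c).
rewrite inE; apply/orP; right.
have lt_i : i.+1 < #|V|.
  have : size s <= #|V| by rewrite -(card_uniqP s_uniq) max_card.
  by rewrite size_s; lia.
apply: (@mem_bigcup_seq _ _ _ _ i.+1); first by rewrite mem_index_iota.
have seg : face_seg d i.+1 = s by rewrite def_s size_m.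
apply/bigcupP; exists d => //; rewrite /long_clashes in_set P /through seg.
have s_sub : all (mem (v |: S)) s by apply/allP.
by rewrite dd s_uniq s_sub vs rep eqxx.
Qed.

Lemma count_extensions :
  #|good_colorings S| * n.+1 <= #|good_colorings (v |: S)| +
    #|good_colorings S| * Delta + \sum_(1 <= i < #|V|) \sum_(d : V * V) #|long_clashes i d|.
Proof.
have card_pairs : #|pairs| = #|good_colorings S| * n.+1 by rewrite cardsX cardsT card_ord.
rewrite -card_pairs -(cardsID good_pairs) -addnA leq_add //.
  exact: leq_trans (subset_leq_card (subsetIr _ _)) card_good_pairs.
apply: leq_trans (subset_leq_card bad_pairs_sub) _.
apply: leq_trans (leq_card_setU _ _) _; rewrite leq_add ?card_short_clashes //.
apply: leq_trans (card_bigcup_seq_le _ _ _) _; apply: leq_sum => i _.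
exact: card_bigcup_seq_le.
Qed.

End Extension.

Section Growth.
Local Open Scope ring_scope.
Variables (R : realFieldType) (x : R).
Hypotheses (x_gt0 : 0 < x) (x_lt1 : x < 1) (x_bound : choice_bound Delta x <= n.+1%:R).

Local Notation N S := (#|good_colorings S|%:R : R).

Section Step.
Variables (S : {set V}) (v : V).
Hypothesis vNS : v \notin S.
Hypothesis shrink : forall T : {set V}, T \subset S -> N (S :\: T) <= x ^+ #|T| * N S.

Lemma card_long_clashes_le i d :
  #|long_clashes S v i d|%:R <= (through S v i d)%:R * (x ^+ i * N S).
Proof.
have [thr|thr] := boolP (through S v i d); last first.
  suff -> : long_clashes S v i d = set0 by rewrite cards0 mul0r.
  by apply/setP => p; rewrite /long_clashes in_set in_set0 (negbTE thr) andbF.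
have [T [TS <- le_T]] := card_long_clashes vNS thr.
by rewrite mul1r (le_trans _ (shrink TS)) // ler_nat.
Qed.

Lemma sum_long_clashes_le :
  (\sum_(1 <= i < #|V|) \sum_(d : V * V) #|long_clashes S v i d|)%:R <=
  2 * Delta%:R * ((1 - x) ^- 2 - 1) * N S.
Proof.
have inner i : (\sum_(d : V * V) #|long_clashes S v i d|)%:R <=
    (2 * Delta%:R * N S) * (i.+1%:R * x ^+ i).
  rewrite natr_sum (le_trans (ler_sum _ (fun d _ => card_long_clashes_le i d))) //.
  rewrite -mulr_suml -natr_sum.
  have -> : \sum_(d : V * V) (through S v i d : nat) = #|[set d | through S v i d]|.
    by rewrite -sum1dep_card [RHS]big_mkcond; apply: eq_bigr => d _; case: through.
  have card_le : #|[set d | through S v i d]|%:R <= ((i.+1 + i.+1) * Delta)%:R :> R.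
    by rewrite ler_nat card_through.
  have -> : 2 * Delta%:R * N S * (i.+1%:R * x ^+ i) =
      ((i.+1 + i.+1) * Delta)%:R * (x ^+ i * N S) by rewrite natrM natrD; ring.
  by apply: ler_wpM2r card_le; rewrite mulr_ge0 ?ler0n // exprn_ge0 // ltW.
rewrite natr_sum (le_trans (ler_sum _ (fun i _ => inner i))) // -mulr_sumr.
rewrite mulrAC; apply: ler_wpM2r; first exact: ler0n.
apply: ler_wpM2l; first by rewrite mulr_ge0 ?ler0n.
by apply: sum_succ_expr_le; rewrite x_lt1 andbT ltW.
Qed.

Lemma extension_step : N S <= x * N (v |: S).
Proof.
have := count_extensions vNS; rewrite -(ler_nat R) !natrD !natrM => count.
have := le_trans count (lerD (lexx _) sum_long_clashes_le).
move: x_bound; rewrite /choice_bound.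
set G := N S; set G' := N (v |: S); set D := Delta%:R; set Q := (1 - x) ^- 2 - 1.
move=> bound count'.
have G_ge0 : 0 <= G by rewrite ler0n.
have bound' : G * x^-1 + G * D + 2 * D * Q * G <= G * n.+1%:R.
  have -> : G * x^-1 + G * D + 2 * D * Q * G = G * (x^-1 + D + 2 * D * Q) by ring.
  by rewrite ler_wpM2l.
have -> : G = x * (G * x^-1) by rewrite mulrCA mulfV ?gt_eqF // mulr1.
apply: ler_wpM2l; [exact: ltW | lra].
Qed.

End Step.

Lemma good_colorings_grow (S : {set V}) v : v \notin S -> N S <= x * N (v |: S).
Proof.
elim: {S}_.+1 {-2}S (ltnSn #|S|) v => // m IH S le_S v vNS.
apply: (extension_step vNS).
apply: (le_setD_expr (F := fun A => N A)) => [|A w AS wA]; first exact: ltW.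
by apply: IH => //; apply: leq_trans (proper_card AS) _.
Qed.

Lemma exists_good_coloring : exists f, f \in good_colorings setT.
Proof.
have := le_setD_expr (F := fun S => N S) (ltW x_gt0)
  (fun A w _ wA => good_colorings_grow wA) (subxx setT).
rewrite setDv card_good_colorings0 => /(lt_le_trans ltr01).
by rewrite pmulr_rgt0 ?exprn_gt0 // ltr0n => /card_gt0P.
Qed.

End Growth.

End ListColoring.

Section ChoiceBound.
Local Open Scope ring_scope.

Lemma facial_thue_choosable_of_bound (V : finType) (adj : rel V) (rot : V -> V -> V)
    (R : realFieldType) (x : R) (k : nat) :
  simple_graph adj -> rotation_system adj rot -> 0 < x < 1 ->
  choice_bound (max_deg adj) x <= k%:R -> facial_thue_choosable adj rot k.
Proof.
move=> [adj_sym adj_irr] rot_sys x01 bound L L_size.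
case: k bound L_size => [|n] bound L_size.
  by have := lt_le_trans (choice_bound_gt0 _ x01) bound; rewrite ltxx.
have /andP[x_gt0 x_lt1] := x01.
have [f /good_coloringsP[_ no_rep]] :=
  exists_good_coloring adj_sym adj_irr rot_sys L_size x_gt0 x_lt1 bound.
exists (paint L f); split=> [v|s fs]; first exact: color_in_list.
by apply: no_rep => // u; rewrite inE.
Qed.

Lemma facial_thue_choosable_sqrt (V : finType) (adj : rel V) (rot : V -> V -> V)
    (R : rcfType) (k : nat) :
  simple_graph adj -> rotation_system adj rot -> (0 < max_deg adj)%nat ->
  (max_deg adj)%:R + 4 * Num.sqrt (max_deg adj)%:R + 3 <= k%:R :> R ->
  facial_thue_choosable adj rot k.
Proof.
move=> simple rot_sys D_gt0 bound.
have [x_gt0 x_lt1 bound_eq] := choice_bound_sqrt R D_gt0.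
apply: (facial_thue_choosable_of_bound simple rot_sys
  (x := (2 * Num.sqrt (max_deg adj)%:R + 1)^-1 : R)); first by rewrite x_gt0 x_lt1.
by rewrite bound_eq; apply: le_trans bound; rewrite lerD2l; lra.
Qed.

End ChoiceBound.

Theorem theorem7 (V : finType) (adj : rel V) (rot : V -> V -> V) :
  simple_graph adj ->
  planar_rotation adj rot ->
  2 <= max_deg adj ->
  forall k : nat,
    (INR (max_deg adj) + 4 * sqrt (INR (max_deg adj)) + 3 <= INR k)%R ->
    facial_thue_choosable adj rot k.
Proof.
move=> simple [rot_sys _] D_ge2 k.
rewrite RsqrtE !RplusE RmultE !IZRposE !INRE => /RleP bound.
exact: (facial_thue_choosable_sqrt simple rot_sys (ltnW D_ge2) bound).
Qed.
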